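(* If $G$ is a connected graph, then $F_c(G)\ge b(G)+1$, and this bound is sharp.
   Context: Forcing process: given a set of initially colored vertices, at each step a colored vertex with exactly one non-colored neighbor forces (colors) that neighbor. A set $S\subseteq V(G)$ is a forcing set if iterating this process from $S$ eventually colors all vertices; it is a connected forcing set if moreover the induced subgraph $G[S]$ is connected. $F_c(G)$ is the minimum cardinality of a connected forcing set of $G$. A block of $G$ is a maximal connected subgraph with no cut vertex of its own; every block of order at least $2$ is either $2$-connected or isomorphic to $K_2$. $b(G)$ denotes the number of $2$-connected blocks of $G$ (blocks of order at least $2$ not isomorphic to $K_2$). Graphs are assumed to have no isolated vertices. *)

From mathcomp Require Import all_boot.
Set Implicit Arguments. Unset Strict Implicit. Unset Printing Implicit Defensive.

Section Graphs.
Variables (T : finType) (e : rel T).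

Definition simple_graph : Prop := symmetric e /\ irreflexive e.
Definition graph_connected : Prop := forall x y : T, connect e x y.
Definition no_isolated : Prop := forall x : T, exists y, e x y.

Definition force_step (A : {set T}) : {set T} :=
  A :|: [set y | [exists x, [&& x \in A, e x y &
                   [forall z, (e x z && (z != y)) ==> (z \in A)]]]].

(* the final colored set: the process stabilises after at most #|T| rounds *)
Definition force_closure (S : {set T}) : {set T} := iter #|T| force_step S.

Definition forcing_set (S : {set T}) : bool := force_closure S == [set: T].

Definition induced_connected (S : {set T}) : bool :=
  [forall x in S, forall y in S,
     connect [rel u v | [&& e u v, u \in S & v \in S]] x y].

Definition connected_forcing_set (S : {set T}) : bool :=
  forcing_set S && induced_connected S.

Definition Fc : nat :=
  \big[minn/#|T|]_(S : {set T} | connected_forcing_set S) #|S|.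

Definition no_cut_vertex (B : {set T}) : bool :=
  induced_connected B && [forall v in B, induced_connected (B :\ v)].

Definition is_block (B : {set T}) : bool := maxset no_cut_vertex B.

(* b(G): number of 2-connected blocks, i.e. blocks of order >= 3
   (order-2 blocks are K_2) *)
Definition b2 : nat := #|[set B : {set T} | is_block B & 3 <= #|B|]|.

End Graphs.

(* A 2-connected block B has no ear: no path avoiding B joins two distinct
   vertices of B, since B together with such a path would be a larger vertex set
   without cut vertex.  Consequently, if a connected colored set meets B in at
   most one vertex, a forcing step keeps it that way (a second colored vertex of
   B would close an ear through the colored set), so a connected forcing set S
   meets every 2-connected block at least twice.  On the other hand, growing S
   one vertex at a time along its connected induced subgraph, each new vertex
   makes at most one more block met twice (two of them would again give an ear),
   so fewer than |S| blocks are met twice.  Hence b(G) < |S|.  A chain of k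
   triangles shows the bound is attained. *)

From mathcomp Require Import all_boot zify.
Set Implicit Arguments. Unset Strict Implicit. Unset Printing Implicit Defensive.

Section SimpleGraph.
Variables (T : finType) (e : rel T).
Hypotheses (e_sym : symmetric e) (e_irr : irreflexive e).
Implicit Types (A B P S X : {set T}) (p s : seq T).

(** * Induced connectivity *)

Definition induced_rel S := [rel u v | [&& e u v, u \in S & v \in S]].

Lemma induced_rel_sym S : symmetric (induced_rel S).
Proof.
by move=> x y /=; rewrite e_sym; case: (x \in S); case: (y \in S); rewrite ?andbF.
Qed.

Lemma connect_induced_sym S x y :
  connect (induced_rel S) x y = connect (induced_rel S) y x.
Proof. exact/sym_connect_sym/induced_rel_sym. Qed.

Lemma connect_induced_sub S S' x y :
  S \subset S' -> connect (induced_rel S) x y -> connect (induced_rel S') x y.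
Proof.
move=> /subsetP sSS'; apply: connect_sub => u v /= /and3P[euv uS vS].
by apply: connect1; rewrite /= euv !sSS'.
Qed.

Lemma induced_connectedP S :
  reflect {in S &, forall x y, connect (induced_rel S) x y} (induced_connected e S).
Proof.
apply: (iffP forallP) => [hS x y xS yS | hS x].
  by move/implyP/(_ xS)/forallP/(_ y)/implyP/(_ yS): (hS x).
by apply/implyP => xS; apply/forallP => y; apply/implyP; apply: hS.
Qed.

Lemma induced_connected_root S a :
  a \in S -> {in S, forall x, connect (induced_rel S) x a} -> induced_connected e S.
Proof.
move=> aS toa; apply/induced_connectedP => x y xS yS.
by apply: connect_trans (toa x xS) _; rewrite connect_induced_sym toa.
Qed.

Lemma induced_connectedU A B a b :
  induced_connected e A -> induced_connected e B -> a \in A -> b \in B ->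
  (a == b) || e a b -> induced_connected e (A :|: B).
Proof.
move=> /induced_connectedP hA /induced_connectedP hB aA bB ab.
have aAB : a \in A :|: B by rewrite inE aA.
have bAB : b \in A :|: B by rewrite inE bB orbT.
apply: (induced_connected_root aAB) => x; rewrite inE => /orP[xA | xB].
  exact: connect_induced_sub (subsetUl A B) (hA x a xA aA).
apply: connect_trans (connect_induced_sub (subsetUr A B) (hB x b xB bB)) _.
case/orP: ab => [/eqP-> | eab]; first exact: connect0.
by rewrite connect_induced_sym; apply: connect1; rewrite /= eab aAB bAB.
Qed.

Lemma induced_connected1 x : induced_connected e [set x].
Proof. by apply/induced_connectedP => u v /set1P-> /set1P->; apply: connect0. Qed.

Lemma induced_connected_path x p : path e x p -> induced_connected e [set:: x :: p].
Proof.
elim: p x => [|y p IHp] x /=; first by rewrite set_seq1 induced_connected1.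
case/andP=> exy /IHp hyp; rewrite set_cons.
by apply: (induced_connectedU (induced_connected1 x) hyp (set11 x) (b := y));
  rewrite ?inE ?eqxx ?exy ?orbT.
Qed.

Lemma induced_connected_sorted s : sorted e s -> induced_connected e [set:: s].
Proof.
case: s => [_ | x p]; last exact: induced_connected_path.
by rewrite set_nil; apply/induced_connectedP => x; rewrite inE.
Qed.

Lemma path_induced_rel S x p :
  path (induced_rel S) x p -> path e x p /\ {subset p <= S}.
Proof.
elim: p x => [|y p IHp] x //= /andP[/and3P[exy _ yS] /IHp[hp pS]].
by rewrite exy hp; split=> // z /predU1P[-> | /pS].
Qed.

Lemma connect_induced_uniq_path S x z : connect (induced_rel S) x z ->
  exists p, [/\ path e x p, uniq (x :: p), last x p = z & {subset p <= S}].
Proof.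
move=> /connectP[q hq ->]; case: (shortenP hq) => p /path_induced_rel[hp pS] up _.
by exists p.
Qed.

Lemma connect_induced_neighbor S x z :
  connect (induced_rel S) x z -> x != z -> exists2 w, w \in S & e x w.
Proof.
move=> /connectP[[|w q] /= hq ->]; first by rewrite eqxx.
by case/andP: hq => /and3P[exw _ wS] _ _; exists w.
Qed.

Lemma induced_connected_boundary X P x :
  induced_connected e X -> P \subset X -> ~~ (X \subset P) -> x \in P ->
  exists u v, [/\ u \in P, v \in X, v \notin P & e u v].
Proof.
move=> /induced_connectedP hX /subsetP PX /subsetPn[z zX zP] xP.
have /connectP[r hr lr] := hX x z (PX x xP) zX.
rewrite {}lr in zP; elim: r x xP hr zP => /= [|y r IHr] x xP; first by rewrite xP.
case/andP=> /and3P[exy _ yX] hr; case yP: (y \in P); first exact: IHr.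
by exists x, y; rewrite yP.
Qed.

(** * Blocks and ears *)

Lemma no_cut_vertexP B :
  reflect (induced_connected e B /\ {in B, forall v, induced_connected e (B :\ v)})
          (no_cut_vertex e B).
Proof.
apply: (iffP andP) => -[hB hBv]; split=> //; last by apply/forallP => v; apply/implyP/hBv.
by move=> v vB; move/forallP/(_ v): hBv; rewrite vB.
Qed.

Lemma no_cut_vertexD1 B v : no_cut_vertex e B -> induced_connected e (B :\ v).
Proof.
case/no_cut_vertexP=> hB hBv; case: (boolP (v \in B)) => [/hBv // | vB].
by rewrite (setDidPl _) // disjoint_sym disjoints1.
Qed.

Lemma no_cut_vertexU B1 B2 x y : no_cut_vertex e B1 -> no_cut_vertex e B2 -> x != y ->
  x \in B1 -> x \in B2 -> y \in B1 -> y \in B2 -> no_cut_vertex e (B1 :|: B2).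
Proof.
move=> ncv1 ncv2 xy x1 x2 y1 y2.
have [[h1 _] [h2 _]] := (no_cut_vertexP _ ncv1, no_cut_vertexP _ ncv2).
apply/no_cut_vertexP; split=> [|v _].
  by apply: (induced_connectedU h1 h2 x1 x2); rewrite eqxx.
have [w wv /andP[w1 w2]] : exists2 w, w != v & (w \in B1) && (w \in B2).
  case: (eqVneq x v) => [<- | xv]; last by exists x; rewrite ?x1.
  by exists y; rewrite 1?eq_sym ?y1.
rewrite setDUl; apply: (induced_connectedU (no_cut_vertexD1 v ncv1) (no_cut_vertexD1 v ncv2)
  (a := w) (b := w)); by rewrite ?inE ?wv ?w1 ?w2 ?eqxx.
Qed.

Lemma no_cut_vertex_clique B :
  {in B &, forall x y, x != y -> e x y} -> no_cut_vertex e B.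
Proof.
have clique_connected (C : {set T}) :
    {in C &, forall x y, x != y -> e x y} -> induced_connected e C.
  move=> hC; apply/induced_connectedP => x y xC yC.
  case: (eqVneq x y) => [-> | xy]; first exact: connect0.
  by apply: connect1; rewrite /= hC ?xC ?yC.
move=> hB; apply/no_cut_vertexP; split=> [|v _]; first exact: clique_connected.
by apply: clique_connected => x y /setD1P[_ xB] /setD1P[_ yB]; apply: hB.
Qed.

Lemma eq_block2 B1 B2 x y : is_block e B1 -> is_block e B2 -> x != y ->
  x \in B1 -> x \in B2 -> y \in B1 -> y \in B2 -> B1 = B2.
Proof.
move=> /maxsetP[ncv1 max1] /maxsetP[ncv2 max2] xy x1 x2 y1 y2.
have ncvU := no_cut_vertexU ncv1 ncv2 xy x1 x2 y1 y2.
by rewrite -(max1 _ ncvU (subsetUl _ _)) -[RHS](max2 _ ncvU (subsetUr _ _)).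
Qed.

Lemma no_cut_vertex_neighbor B x y : no_cut_vertex e B -> 3 <= #|B| -> x \in B ->
  exists2 w, w \in B & e x w && (w != y).
Proof.
move=> ncvB B3 xB; have /no_cut_vertexP[/induced_connectedP hB _] := ncvB.
have : 0 < #|B :\: [set x; y]|.
  rewrite cardsD; have := subset_leq_card (subsetIr B [set x; y]).
  by rewrite cards2; case: (x != y) => /=; lia.
case/card_gt0P=> z /setDP[zB]; rewrite !inE negb_or eq_sym => /andP[xz zy].
case: (eqVneq x y) => [<- | xy].
  have [w wB exw] := connect_induced_neighbor (hB x z xB zB) xz.
  by exists w; rewrite // exw; apply: contraTneq exw => ->; rewrite e_irr.
have xBy : x \in B :\ y by rewrite !inE xy.
have zBy : z \in B :\ y by rewrite !inE zy.
have /induced_connectedP hBy := no_cut_vertexD1 y ncvB.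
have [w /setD1P[wy wB] exw] := connect_induced_neighbor (hBy x z xBy zBy) xz.
by exists w; rewrite // exw.
Qed.

Lemma induced_connected_attach A s a c : induced_connected e A -> sorted e s ->
  a \in A -> c \in s -> e a c -> induced_connected e (A :|: [set:: s]).
Proof.
move=> hA hs aA cs eac.
apply: (induced_connectedU hA (induced_connected_sorted hs) aA (b := c)).
  by rewrite inE.
by rewrite eac orbT.
Qed.

Lemma induced_connected_ear_delete B y y' s v :
  induced_connected e B -> y \in B -> y' \in B -> uniq s -> sorted e s ->
  e y (head y s) -> e (last y s) y' -> v \in s -> v \notin B ->
  induced_connected e ((B :|: [set:: s]) :\ v).
Proof.
move=> hB yB y'B + + + + vs; case/splitPr: vs => p1 p2.
rewrite cat_uniq /= => /and4P[_ /norP[vp1 _] vp2 _] /cat_sorted2[sp1 /path_sorted sp2].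
move=> ey; rewrite last_cat /= => el vB.
have -> : (B :|: [set:: p1 ++ v :: p2]) :\ v = (B :|: [set:: p1]) :|: [set:: p2].
  apply/setP => z; rewrite !inE mem_cat in_cons.
  case: (eqVneq z v) => [-> | _] /=; last by rewrite orbA.
  by rewrite (negbTE vB) (negbTE vp1) (negbTE vp2).
have hBp1 : induced_connected e (B :|: [set:: p1]).
  case: p1 {vp1} sp1 ey => [_ _ | x p1 sp1 ey]; first by rewrite set_nil setU0.
  exact: (induced_connected_attach hB sp1 yB (mem_head x p1) ey).
case: p2 {vp2 ey} sp2 el => [_ _ | w p2 sp2]; first by rewrite set_nil setU0.
rewrite e_sym => el.
have y'B1 : y' \in B :|: [set:: p1] by rewrite inE y'B.
exact: (induced_connected_attach hBp1 sp2 y'B1 (mem_last w p2) el).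
Qed.

Lemma no_cut_vertex_add_ear B y y' x p :
  no_cut_vertex e B -> y \in B -> y' \in B -> y != y' ->
  uniq (x :: p) -> path e x p -> e y x -> e (last x p) y' ->
  {in x :: p, forall z, z \notin B} -> no_cut_vertex e (B :|: [set:: x :: p]).
Proof.
move=> ncvB yB y'B yy' up hp eyx el earB; have /no_cut_vertexP[hB _] := ncvB.
have hX := induced_connected_path hp.
have xX : x \in [set:: x :: p] by rewrite inE mem_head.
have lX : last x p \in [set:: x :: p] by rewrite inE mem_last.
apply/no_cut_vertexP; split=> [|v].
  by apply: (induced_connectedU hB hX yB xX); rewrite eyx orbT.
rewrite in_setU in_set => /orP[vB | vX]; last first.
  by apply: (induced_connected_ear_delete hB yB y'B up hp) => //; apply: earB.
have vX : v \notin [set:: x :: p].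
  by rewrite in_set; apply/negP => vp; move: (earB v vp); rewrite vB.
rewrite setDUl [[set:: x :: p] :\ v](setDidPl _); last by rewrite disjoint_sym disjoints1.
have hBv := no_cut_vertexD1 v ncvB.
case: (eqVneq y v) => [yv | yv].
  have y'Bv : y' \in B :\ v by rewrite !inE y'B -yv eq_sym yy'.
  by apply: (induced_connectedU hBv hX y'Bv lX); rewrite e_sym el orbT.
have yBv : y \in B :\ v by rewrite !inE yB andbT.
by apply: (induced_connectedU hBv hX yBv xX); rewrite eyx orbT.
Qed.

Lemma block_no_ear B y y' x p : is_block e B -> y \in B -> y' \in B -> y != y' ->
  path e x p -> e y x -> e (last x p) y' -> ~ {in x :: p, forall z, z \notin B}.
Proof.
move=> /maxsetP[ncvB maxB] yB y'B yy' hp eyx el earB.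
case: (shortenP hp) el => q hq uq qp el.
have earqB : {in x :: q, forall z, z \notin B}.
  by move=> z /predU1P[-> | /qp zp]; apply: earB; rewrite inE ?eqxx ?zp ?orbT.
have ncvU := no_cut_vertex_add_ear ncvB yB y'B yy' uq hq eyx el earqB.
have /setUidPl XB := maxB _ ncvU (subsetUl _ _).
by move: (earB x (mem_head x p)); rewrite (subsetP XB) // inE mem_head.
Qed.

(** * Forcing inside a block *)

Lemma meet_le1P A B : reflect
  (forall u v, u \in A -> u \in B -> v \in A -> v \in B -> u = v) (#|A :&: B| <= 1).
Proof.
apply: (iffP card_le1_eqP) => [h u v uA uB vA vB | h u v /setIP[uA uB] /setIP[vA vB]].
  by apply: h; rewrite inE ?uA ?vA.
exact: h.
Qed.

Lemma subset_force_step A : A \subset force_step e A.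
Proof. exact: subsetUl. Qed.

Lemma force_step_forced A y : y \in force_step e A -> y \notin A ->
  exists x, [/\ x \in A, e x y & forall z, e x z -> z != y -> z \in A].
Proof.
rewrite !inE => /orP[-> // | /existsP[x /and3P[xA exy /forallP hx]]] _.
by exists x; split=> // z exz zy; move/implyP: (hx z); apply; rewrite exz.
Qed.

Lemma induced_connected_force_step A :
  induced_connected e A -> induced_connected e (force_step e A).
Proof.
move=> /induced_connectedP hA; set A' := force_step e A.
have AA' := subset_force_step A.
have toA z : z \in A' -> exists2 a, a \in A & connect (induced_rel A') z a.
  move=> zA'; case: (boolP (z \in A)) => [zA | /(force_step_forced zA')[x [xA exz _]]].
    by exists z => //; apply: connect0.
  by exists x => //; apply: connect1; rewrite /= e_sym exz zA' (subsetP AA').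
apply/induced_connectedP => x y /toA[a aA xa] /toA[b bA yb].
apply: connect_trans xa (connect_trans (connect_induced_sub AA' (hA a b aA bA)) _).
by rewrite connect_induced_sym.
Qed.

Lemma force_step_block_met A B c y : is_block e B -> 3 <= #|B| ->
  induced_connected e A -> #|A :&: B| <= 1 -> c \in A -> c \in B ->
  y \in force_step e A -> y \in B -> y \in A.
Proof.
move=> blockB B3 /induced_connectedP hA /meet_le1P AB1 cA cB yA' yB.
case: (boolP (y \in A)) => // yA; exfalso.
have [x [xA exy xforced]] := force_step_forced yA' yA.
case: (boolP (x \in B)) => [xB | xB].
  have [w wB /andP[exw wy]] := no_cut_vertex_neighbor y (maxsetp blockB) B3 xB.
  have wA := xforced w exw wy.
  by move: exw; rewrite (AB1 w x wA wB xA xB) e_irr.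
have [p [hp up lp pA]] := connect_induced_uniq_path (hA c x cA xA).
case: p hp up lp pA => [_ _ /= cx | x0 p]; first by rewrite -cx cB in xB.
rewrite /= => /andP[ecx0 hp] /andP[cp _] lp pA.
have cy : c != y by apply: contraNneq yA => <-.
apply: (block_no_ear blockB cB yB cy hp ecx0); first by rewrite lp.
move=> z zp; apply: contraNN cp => zB.
by rewrite -(AB1 z c (pA z zp) zB cA cB).
Qed.

Lemma force_step_block_disjoint A B : is_block e B ->
  induced_connected e A -> [disjoint A & B] -> #|force_step e A :&: B| <= 1.
Proof.
move=> blockB /induced_connectedP hA AB; apply/meet_le1P => u v uA' uB vA' vB.
have notA z : z \in B -> z \notin A by move=> zB; rewrite (disjointFl AB zB).
case: (eqVneq u v) => // uv; exfalso.
have [x1 [x1A ex1u _]] := force_step_forced uA' (notA u uB).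
have [x2 [x2A ex2v _]] := force_step_forced vA' (notA v vB).
have [p [hp _ lp pA]] := connect_induced_uniq_path (hA x1 x2 x1A x2A).
apply: (block_no_ear blockB uB vB uv hp); [by rewrite e_sym | by rewrite lp |].
by move=> z /predU1P[-> | /pA zA]; rewrite (disjointFr AB) ?x1A.
Qed.

Lemma force_step_meet_le1 A B : is_block e B -> 3 <= #|B| ->
  induced_connected e A -> #|A :&: B| <= 1 -> #|force_step e A :&: B| <= 1.
Proof.
move=> blockB B3 hA AB1; case: (set_0Vmem (A :&: B)) => [/eqP | [c /setIP[cA cB]]].
  by rewrite setI_eq0; apply: force_step_block_disjoint.
apply: (leq_trans (subset_leq_card _) AB1); apply/subsetP => y /setIP[yA' yB].
by rewrite inE yB (force_step_block_met blockB B3 hA AB1 cA cB yA' yB).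
Qed.

Lemma connected_forcing_set_meet_block S B : connected_forcing_set e S ->
  is_block e B -> 3 <= #|B| -> 2 <= #|S :&: B|.
Proof.
case/andP=> /eqP forceS hS blockB B3; rewrite ltnNge; apply/negP => SB1.
have inv t : induced_connected e (iter t (force_step e) S) /\
             #|iter t (force_step e) S :&: B| <= 1.
  elim: t => [|t [ht htB]] //=; split; first exact: induced_connected_force_step.
  exact: force_step_meet_le1.
by have [_] := inv #|T|; rewrite -/(force_closure e S) forceS setTI leqNgt (leq_trans _ B3).
Qed.

(** * Blocks met twice by a connected set *)

Definition blocks_met_twice P :=
  [set B | [&& is_block e B, 3 <= #|B| & 2 <= #|P :&: B|]].

Lemma blocks_met_twice1 x : blocks_met_twice [set x] = set0.
Proof.
apply/setP => B; rewrite !inE; have := subset_leq_card (subsetIl [set x] B).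
by rewrite cards1 => le1; rewrite (leqNgt 2) ltnS le1 !andbF.
Qed.

Lemma meet_setU1_twice P B x :
  2 <= #|(x |: P) :&: B| -> #|P :&: B| <= 1 -> x \in B /\ exists2 a, a \in P & a \in B.
Proof.
move=> /card_gt1P[u [v [/setIP[uP uB] /setIP[vP vB] uv]]] /meet_le1P PB1.
move: uP vP; rewrite !in_setU1.
case: (eqVneq u x) => [<- _ | _ /= uP].
  by rewrite eq_sym (negbTE uv) => vP; split=> //; exists v.
case: (eqVneq v x) => [vx _ | _ /= vP]; first by subst v; split=> //; exists u.
by rewrite (PB1 u v) ?eqxx in uv.
Qed.

Lemma eq_blocks_through_new_vertex P x B1 B2 a1 a2 :
  induced_connected e P -> x \notin P -> is_block e B1 -> is_block e B2 ->
  x \in B1 -> x \in B2 -> #|P :&: B1| <= 1 ->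
  a1 \in P -> a1 \in B1 -> a2 \in P -> a2 \in B2 -> B1 = B2.
Proof.
move=> /induced_connectedP hP xP block1 block2 xB1 xB2 /meet_le1P PB1 a1P a1B1 a2P a2B2.
have a1x : a1 != x by apply: contraNneq xP => <-.
case: (boolP (a1 \in B2)) => [a1B2 | a1B2].
  exact: eq_block2 block1 block2 a1x _ _ xB1 xB2.
case: (eqVneq B1 B2) => // B12; exfalso.
have B1B2 z : z \in B1 -> z \in B2 -> z = x.
  move=> z1 z2; apply/eqP; apply: contraNT B12 => zx.
  exact/eqP/(eq_block2 block1 block2 zx).
(* Otherwise a path from a1 to a2 inside P, continued by a path from a2 to x
   inside B2, is an ear of B1. *)
have [[|x0 p] [hp up lp pP]] := connect_induced_uniq_path (hP a1 a2 a1P a2P).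
  by rewrite /= in lp; rewrite lp a2B2 in a1B2.
have /no_cut_vertexP[/induced_connectedP hB2 _] := maxsetp block2.
have [q [hq uq lq qB2]] := connect_induced_uniq_path (hB2 a2 x a2B2 xB2).
case/lastP: q hq uq lq qB2 => [_ _ /= a2x | q y]; first by rewrite -a2x a2P in xP.
rewrite last_rcons rcons_path /= rcons_uniq => /andP[hq elq] /andP[_ /andP[yq _]] yx qB2.
subst y.
move: hp up lp pP => /= /andP[ea1x0 hp] /andP[a1p _] lp pP.
apply: (block_no_ear block1 a1B1 xB1 a1x (p := p ++ q) _ ea1x0).
- by rewrite cat_path hp lp.
- by rewrite last_cat lp.
move=> z; rewrite -cat_cons mem_cat => /orP[zp | zq]; apply/negP => zB1.
  by move: a1p; rewrite -(PB1 z a1 (pP z zp) zB1 a1P a1B1) zp.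
have zB2 : z \in B2 by apply: qB2; rewrite mem_rcons in_cons zq orbT.
by move: yq; rewrite -(B1B2 z zB1 zB2) zq.
Qed.

Lemma card_blocks_met_twice_setU1 P x : induced_connected e P -> x \notin P ->
  #|blocks_met_twice (x |: P)| <= #|blocks_met_twice P| + 1.
Proof.
move=> hP xP; rewrite -(cardsID (blocks_met_twice P)).
rewrite leq_add ?subset_leq_card ?subsetIr //.
apply/card_le1_eqP => B1 B2; rewrite !inE.
move=> /andP[new1 /and3P[block1 B13 twice1]] /andP[new2 /and3P[block2 B23 twice2]].
rewrite block1 B13 /= -ltnNge ltnS in new1; rewrite block2 B23 /= -ltnNge ltnS in new2.
have [xB1 [a1 a1P a1B1]] := meet_setU1_twice twice1 new1.
have [xB2 [a2 a2P a2B2]] := meet_setU1_twice twice2 new2.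
by rewrite (eq_blocks_through_new_vertex hP xP block1 block2 xB1 xB2 new1 a1P a1B1 a2P a2B2).
Qed.

Lemma card_blocks_met_twice_lt X x : induced_connected e X -> x \in X ->
  #|blocks_met_twice X| < #|X|.
Proof.
move=> hX xX.
suff grow k : k < #|X| -> exists P, [/\ P \subset X, induced_connected e P,
    #|P| = k.+1 & #|blocks_met_twice P| <= k].
  have X0 : 0 < #|X| by apply/card_gt0P; exists x.
  have := grow #|X|.-1; rewrite ltn_predL prednK // => /(_ X0)[P [PX _ cardP twiceP]].
  have /eqP PeX : P == X by rewrite eqEcard PX cardP leqnn.
  by rewrite -PeX; lia.
elim: k => [_ | k IHk kX].
  exists [set x]; split; rewrite ?sub1set ?cards1 ?blocks_met_twice1 ?cards0 //.
  exact: induced_connected1.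
have [P [PX hP cardP twiceP]] := IHk (ltnW kX).
have XP : ~~ (X \subset P) by apply/negP => /subset_leq_card; rewrite cardP leqNgt kX.
have [y yP] : exists y, y \in P by apply/card_gt0P; rewrite cardP.
have [u [v [uP vX vP euv]]] := induced_connected_boundary hX PX XP yP.
exists (v |: P); split.
- by rewrite subUset sub1set vX PX.
- apply: (induced_connectedU (induced_connected1 v) hP (set11 v) uP).
  by rewrite e_sym euv orbT.
- by rewrite cardsU1 vP cardP.
by apply: leq_trans (card_blocks_met_twice_setU1 hP vP) _; rewrite addn1.
Qed.

Lemma force_closure0 : force_closure e set0 = set0.
Proof.
rewrite /force_closure; elim: #|T| => //= n ->.
by apply/setP => z; rewrite !inE; apply/existsP => -[y]; rewrite inE.
Qed.

Lemma subset_force_closure S : S \subset force_closure e S.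
Proof.
rewrite /force_closure; elim: #|T| => //= n IHn.
exact: subset_trans IHn (subset_force_step _).
Qed.

Lemma connected_forcing_setT :
  graph_connected e -> connected_forcing_set e [set: T].
Proof.
move=> connG; rewrite /connected_forcing_set /forcing_set eqEsubset subsetT.
rewrite subset_force_closure; apply/induced_connectedP => x y _ _.
by apply: connect_sub (connG x y) => u v euv; apply: connect1; rewrite /= euv !inE.
Qed.

Lemma b2_lt_connected_forcing_set S :
  0 < #|T| -> connected_forcing_set e S -> b2 e < #|S|.
Proof.
move=> T0 forceS; have /andP[/eqP closedS hS] := forceS.
have [S0 | [x xS]] := set_0Vmem S.
  by move: T0; rewrite -cardsT -closedS S0 force_closure0 cards0.
apply: leq_ltn_trans (card_blocks_met_twice_lt hS xS); apply: subset_leq_card.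
apply/subsetP => B; rewrite !inE => /andP[blockB B3].
by rewrite blockB B3 (connected_forcing_set_meet_block forceS).
Qed.

Lemma b2_lt_Fc : 0 < #|T| -> graph_connected e -> b2 e < Fc e.
Proof.
move=> T0 connG; apply: (big_ind (fun n => b2 e < n)).
- by rewrite -cardsT; apply/b2_lt_connected_forcing_set/connected_forcing_setT.
- by move=> m n bm bn; rewrite leq_min bm bn.
by move=> S; apply: b2_lt_connected_forcing_set.
Qed.

End SimpleGraph.

Lemma geq_bigmin_seq (I : eqType) (r : seq I) (P : pred I) (F : I -> nat) d i :
  i \in r -> P i -> \big[minn/d]_(j <- r | P j) F j <= F i.
Proof.
elim: r => // j r IHr; rewrite in_cons big_cons => /predU1P[<- -> | ir Pi].
  exact: geq_minl.
by case: (P j); [apply: leq_trans (geq_minr _ _) (IHr ir Pi) | exact: IHr].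
Qed.

(** * A chain of triangles *)

(* On the vertices 0, ..., 2k+1: the path with the extra edges 2i -- 2i+2, i.e. the
   triangles {2i, 2i+1, 2i+2} for i < k followed by the pendant edge {2k, 2k+1}. *)
Definition chain_arc (i j : nat) : bool := (j == i.+1) || ~~ odd i && (j == i.+2).
Definition chain_adj (i j : nat) : bool := chain_arc i j || chain_arc j i.

Section TriangleChain.
Variable k : nat.

Definition chain_size := k.*2.+2.
Definition chain : rel 'I_chain_size := fun u v => chain_adj u v.

Lemma chain_sym : symmetric chain.
Proof. by move=> u v; rewrite /chain /chain_adj orbC. Qed.

Lemma chain_irr : irreflexive chain.
Proof. by move=> u; rewrite /chain /chain_adj /chain_arc; apply/negbTE; lia. Qed.

Lemma chain_no_isolated : no_isolated chain.
Proof.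
move=> [m mn]; case: (ltnP m.+1 chain_size) => m1n.
  by exists (Ordinal m1n); rewrite /chain /chain_adj /chain_arc /=; lia.
have m1n' : m.-1 < chain_size by lia.
exists (Ordinal m1n'); move: m1n mn.
by rewrite /chain /chain_adj /chain_arc /chain_size /=; lia.
Qed.

Lemma chain_connected : graph_connected chain.
Proof.
have from0 m (mn : m < chain_size) : connect chain ord0 (Ordinal mn).
  elim: m mn => [mn | m IHm mn]; first by apply: eq_connect0; apply: val_inj.
  apply: connect_trans (IHm (ltnW mn)) (connect1 _).
  by rewrite /chain /chain_adj /chain_arc /=; lia.
move=> x y; apply: connect_trans (_ : connect chain x ord0) _.
  by rewrite (sym_connect_sym chain_sym); case: x => m mn; apply: from0.
by case: y => m mn; apply: from0.
Qed.

Definition chain_evens := [set i : 'I_chain_size | ~~ odd i].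

Lemma chain_evens_connected : induced_connected chain chain_evens.
Proof.
have from0 m (mn : m.*2 < chain_size) :
    connect (induced_rel chain chain_evens) ord0 (Ordinal mn).
  elim: m mn => [mn | m IHm mn]; first by apply: eq_connect0; apply: val_inj.
  have mn' : m.*2 < chain_size by lia.
  apply: connect_trans (IHm mn') (connect1 _).
  by rewrite /= /chain /chain_adj /chain_arc !inE /=; apply/and3P; split; lia.
have even0 (z : 'I_chain_size) : ~~ odd z -> connect (induced_rel chain chain_evens) ord0 z.
  move=> ez; have zn : (z./2).*2 < chain_size by have := ltn_ord z; lia.
  by have -> : z = Ordinal zn by apply: val_inj => /=; lia.
apply/induced_connectedP => x y; rewrite !inE => ex ey.
by apply: connect_trans (even0 y ey); rewrite (connect_induced_sym chain_sym) even0.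
Qed.

Lemma chain_evens_forcing : forcing_set chain chain_evens.
Proof.
have colored t (i : 'I_chain_size) :
    ~~ odd i || (i < t.*2) -> i \in iter t (force_step chain) chain_evens.
  elim: t i => [i | t IHt i it] /=; first by rewrite orbF inE.
  case: (boolP (~~ odd i || (i < t.*2))) => [it' | it'].
    exact: subsetP (subset_force_step _ _) _ (IHt _ it').
  have tn : t.*2 < chain_size by have := ltn_ord i; lia.
  rewrite /force_step !inE; apply/orP; right; apply/existsP; exists (Ordinal tn).
  apply/and3P; split.
  - by apply: IHt; rewrite /=; lia.
  - by move: it it'; rewrite /chain /chain_adj /chain_arc /=; lia.
  apply/forallP => z; apply/implyP => /andP[ez zi]; apply: IHt.
  move: ez zi it it'; rewrite /chain -(inj_eq val_inj) /=.
  by rewrite /chain_adj /chain_arc; lia.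
rewrite /forcing_set /force_closure eqEsubset subsetT /=.
by apply/subsetP => i _; apply: colored; rewrite card_ord; have := ltn_ord i; lia.
Qed.

Lemma Fc_chain : Fc chain <= k.+1.
Proof.
have cfs : connected_forcing_set chain chain_evens.
  by rewrite /connected_forcing_set chain_evens_forcing chain_evens_connected.
apply: leq_trans (geq_bigmin_seq _ _ (mem_index_enum chain_evens) cfs) _.
have -> : chain_evens = [set inord j.*2 | j : 'I_k.+1].
  apply/setP => i; rewrite inE; apply/idP/imsetP => [ei | [j _ ->]].
    have jk : i./2 < k.+1 by have := ltn_ord i; rewrite /chain_size; lia.
    exists (Ordinal jk) => //; apply: val_inj; rewrite /= inordK; have := ltn_ord i; lia.
  by rewrite inordK ?odd_double //; have := ltn_ord j; rewrite /chain_size; lia.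
by apply: leq_trans (leq_imset_card _ _) _; rewrite card_ord.
Qed.

Definition chain_triangle (i : 'I_k) : {set 'I_chain_size} :=
  [set inord i.*2; inord i.*2.+1; inord i.*2.+2].

Lemma mem_chain_triangle i (x : 'I_chain_size) :
  (x \in chain_triangle i) = (i.*2 <= x <= i.*2.+2).
Proof.
have ik := ltn_ord i.
by rewrite !inE -!val_eqE /= !inordK /chain_size; lia.
Qed.

Lemma chain_triangle_no_cut_vertex i : no_cut_vertex chain (chain_triangle i).
Proof.
apply: no_cut_vertex_clique => x y; rewrite !mem_chain_triangle -val_eqE /= /chain.
by move: (val x) (val y) => a b; rewrite /chain_adj /chain_arc; lia.
Qed.

Lemma card_chain_triangle i : 3 <= #|chain_triangle i|.
Proof.
apply/card_gt2P; exists (inord i.*2), (inord i.*2.+1), (inord i.*2.+2).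
have ik := ltn_ord i.
by rewrite !mem_chain_triangle -!val_eqE /= !inordK /chain_size; do ?split; lia.
Qed.

Definition chain_block i : {set 'I_chain_size} :=
  s2val (maxset_exists (chain_triangle_no_cut_vertex i)).

Lemma chain_block_is_block i : is_block chain (chain_block i).
Proof. exact: s2valP (maxset_exists (chain_triangle_no_cut_vertex i)). Qed.

Lemma chain_triangle_sub_block i : chain_triangle i \subset chain_block i.
Proof. exact: s2valP' (maxset_exists (chain_triangle_no_cut_vertex i)). Qed.

Lemma connect_induced_chain_lt (A : {set 'I_chain_size}) (c x y : 'I_chain_size) :
  ~~ odd c -> c \notin A -> x < c -> connect (induced_rel chain A) x y -> y < c.
Proof.
move=> ec cA xc /connectP[p hp ->]; elim: p x xc hp => //= z p IHp x xc.
case/andP=> /and3P[exz _ zA]; apply: IHp.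
have zc : z != c :> nat by rewrite val_eqE; apply: contraNneq cA => <-.
move: exz zc xc ec; rewrite /chain; move: (nat_of_ord x) (nat_of_ord z) (nat_of_ord c).
by move=> a b d; rewrite /chain_adj /chain_arc; lia.
Qed.

Lemma chain_block_inj : injective chain_block.
Proof.
suff lt_neq (i j : 'I_k) : i < j -> chain_block i != chain_block j.
  move=> i j eqij; case: (ltngtP i j) => [/lt_neq | /lt_neq | /val_inj //];
  by rewrite eqij eqxx.
move=> ij; apply/eqP => eqij.
pose a : 'I_chain_size := inord i.*2.+1; pose c : 'I_chain_size := inord i.*2.+2.
pose b : 'I_chain_size := inord j.*2.+1.
have [ik jk] := (ltn_ord i, ltn_ord j).
have [va vb vc] : [/\ a = i.*2.+1 :> nat, b = j.*2.+1 :> nat & c = i.*2.+2 :> nat].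
  by rewrite /= !inordK /chain_size; do ?split; lia.
have inB (l : 'I_k) (x : 'I_chain_size) : l.*2 <= x <= l.*2.+2 -> x \in chain_block l.
  by rewrite -mem_chain_triangle; apply/subsetP/chain_triangle_sub_block.
have aB : a \in chain_block i :\ c.
  by rewrite !inE -val_eqE /= va vc inB ?va; lia.
have bB : b \in chain_block i :\ c.
  by rewrite !inE -val_eqE /= vb vc eqij inB ?vb; lia.
(* The even vertex c separates a from b, yet the block minus c stays connected. *)
have /induced_connectedP hBc := no_cut_vertexD1 c (maxsetp (chain_block_is_block i)).
have ec : ~~ odd c by rewrite vc /= odd_double.
have ac : a < c by rewrite va vc.
have := connect_induced_chain_lt ec (negbT (setD11 c _)) ac (hBc a b aB bB).
by rewrite vb vc; lia.
Qed.

Lemma chain_b2 : k <= b2 chain.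
Proof.
rewrite -[k in k <= _]card_ord -(card_imset _ chain_block_inj) /b2.
apply/subset_leq_card/subsetP => _ /imsetP[i _ ->].
rewrite inE chain_block_is_block (leq_trans (card_chain_triangle i)) //.
exact/subset_leq_card/chain_triangle_sub_block.
Qed.

End TriangleChain.

Theorem theorem5 :
  (forall (T : finType) (e : rel T),
      simple_graph e -> 0 < #|T| -> no_isolated e -> graph_connected e ->
      b2 e + 1 <= Fc e)
  /\
  (forall k : nat, exists (T : finType) (e : rel T),
      [/\ simple_graph e, 0 < #|T|, no_isolated e, graph_connected e
        & Fc e = b2 e + 1 /\ b2 e = k]).
Proof.
split=> [T e [e_sym e_irr] T0 _ connG | k]; first by rewrite addn1 b2_lt_Fc.
exists ('I_(chain_size k) : finType), (@chain k).
have T0 : 0 < #|'I_(chain_size k)| by rewrite card_ord.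
have lb := b2_lt_Fc (@chain_sym k) (@chain_irr k) T0 (@chain_connected k).
have [ub kb] := (@Fc_chain k, @chain_b2 k).
split; [exact: conj (@chain_sym k) (@chain_irr k) | by [] | exact: chain_no_isolated |
        exact: chain_connected | ].
by move: (Fc _) (b2 _) lb ub kb => f b; split; lia.
Qed.
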